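(* Let $u$ be a one-sided Sturmian sequence and $(X_u^+,\sigma)$ its associated Sturmian system. In the HB diagram of $X_u^+$, for every $n\ge1$ there are exactly $n+1$ paths of length $n$ starting from either the vertex $0$ or the vertex $1$.
   Context: A sequence $u\in\{0,1\}^{\mathbb N}$ is Sturmian if for every $n\ge1$ exactly $n+1$ distinct blocks of length $n$ occur in $u$. $X_u^+$ is the closure of $\{\sigma^n u:n\in\mathbb N\}$, $\sigma$ the shift $(\sigma x)_i=x_{i+1}$, and $\tilde X_u=\{x\in\{0,1\}^{\mathbb Z}: x_px_{p+1}\dots\in X_u^+\ \forall p\}$ its natural extension. For a block $a_{-n}\dots a_0$ occurring in $\tilde X_u$, $\mathrm{fol}(a_{-n}\dots a_0)=\{b_0b_1\dots\in X_u^+:\exists b\in\tilde X_u,\ b_{-n}\dots b_0=a_{-n}\dots a_0\}$. A block $a_{-n}\dots a_0$ ($n\ge1$) is significant if $\mathrm{fol}(a_{-n}\dots a_0)\subsetneq\mathrm{fol}(a_{-n+1}\dots a_0)$; the blocks $0$ and $1$ are also significant. $\mathrm{sig}(\cdot)$ is the longest significant suffix. The HB diagram has vertex set the significant blocks and an arrow $\alpha\to\beta$ iff there is a symbol $b$ with $\alpha b$ occurring in $\tilde X_u$ and $\beta=\mathrm{sig}(\alpha b)$. The length of a path is its number of vertices. *)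

From mathcomp Require Import all_boot all_algebra.
Set Implicit Arguments. Unset Strict Implicit. Unset Printing Implicit Defensive.
Import GRing.Theory Num.Theory.
Local Open Scope ring_scope.

Definition has_card (T : eqType) (P : T -> Prop) (k : nat) : Prop :=
  exists s : seq T, [/\ uniq s, size s = k & forall x, x \in s <-> P x].

Definition block_at (x : nat -> bool) (i n : nat) : seq bool :=
  [seq x (i + k)%N | k <- iota 0 n].

Definition sturmian (u : nat -> bool) : Prop :=
  forall n : nat, (1 <= n)%N ->
    has_card (fun w : seq bool => size w = n /\ exists i, w = block_at u i n) n.+1.

Definition shiftn (n : nat) (x : nat -> bool) : nat -> bool := fun i => x (n + i)%N.

(* X_u^+ : closure of the orbit {sigma^n u} in the product topology of
   {0,1}^N (x is a limit of shifts of u iff every prefix of x is matched by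
   some shift of u). *)
Definition Xplus (u : nat -> bool) (x : nat -> bool) : Prop :=
  forall N : nat, exists n : nat, forall i : nat, (i < N)%N -> shiftn n u i = x i.

Definition Xtilde (u : nat -> bool) (x : int -> bool) : Prop :=
  forall p : int, Xplus u (fun i : nat => x (p + i%:Z)).

Definition occurs (u : nat -> bool) (w : seq bool) : Prop :=
  exists x : int -> bool, Xtilde u x /\
    exists p : int, forall k : nat, (k < size w)%N -> x (p + k%:Z) = nth false w k.

(* fol(a_(-n) ... a_0) for a block w = a_(-n) ... a_0 (so n = size w - 1):
   the y in X_u^+ such that some b in X~_u has b_(-n)..b_0 = w and
   b_0 b_1 ... = y. *)
Definition fol (u : nat -> bool) (w : seq bool) (y : nat -> bool) : Prop :=
  Xplus u y /\
  exists b : int -> bool, [/\ Xtilde u b,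
    (forall k : nat, (k < size w)%N -> b (k%:Z - (size w).-1%:Z) = nth false w k)
    & forall i : nat, b i%:Z = y i].

Definition significant (u : nat -> bool) (w : seq bool) : Prop :=
  (size w = 1%N) \/
  [/\ (2 <= size w)%N, occurs u w,
      (forall y, fol u w y -> fol u (behead w) y)
    & exists y, fol u (behead w) y /\ ~ fol u w y].

Definition is_sig (u : nat -> bool) (w beta : seq bool) : Prop :=
  [/\ suffix beta w, significant u beta
    & forall g : seq bool, suffix g w -> significant u g -> (size g <= size beta)%N].

Definition hb_arrow (u : nat -> bool) (alpha beta : seq bool) : Prop :=
  significant u alpha /\
  exists b : bool, occurs u (rcons alpha b) /\ is_sig u (rcons alpha b) beta.

(* a path in the HB diagram, given as its list of vertices
   (its length is the number of vertices) *)
Fixpoint hb_path_from (u : nat -> bool) (v : seq bool) (p : seq (seq bool)) : Prop :=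
  match p with
  | [::] => True
  | w :: p' => hb_arrow u v w /\ hb_path_from u w p'
  end.

Definition hb_path (u : nat -> bool) (p : seq (seq bool)) : Prop :=
  match p with
  | [::] => False
  | v :: p' => significant u v /\ hb_path_from u v p'
  end.

(* Reading a block w = a_1 ... a_n letter by letter from the vertex a_1 follows the
   HB path sig(a_1), sig(a_1 a_2), ..., sig(w): every suffix of w at least as long as
   sig(w) has the same follower set as sig(w), so w b occurs iff sig(w) b does, and
   sig(w b) = sig(sig(w) b).  Conversely every path from a one-letter vertex arises in
   this way, and the last letters of its vertices give back w.  So the paths of length n
   from 0 or 1 are in bijection with the blocks of length n occurring in the natural
   extension.  These are exactly the n+1 factors of u of length n: a Sturmian sequence is
   recurrent (otherwise its shift would have at most m factors of some length m, hence be
   eventually periodic by the Morse-Hedlund argument, and so would u), hence each factor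
   extends on both sides indefinitely and yields a point of the natural extension. *)

From mathcomp Require Import all_boot all_algebra.
From mathcomp Require Import zify ring.
From Stdlib Require Import Classical ClassicalEpsilon.
Set Implicit Arguments. Unset Strict Implicit. Unset Printing Implicit Defensive.
Import GRing.Theory Num.Theory.

Lemma rcons_neq0 (T : Type) (s : seq T) x : rcons s x <> [::].
Proof. by case: s. Qed.

Lemma suffix_eq_size (T : eqType) (s t w : seq T) :
  suffix s w -> suffix t w -> size s = size t -> s = t.
Proof. by rewrite !suffixE => /eqP sE /eqP tE st; rewrite -sE st tE. Qed.

Lemma suffix_leq_size (T : eqType) (s t w : seq T) :
  suffix s w -> suffix t w -> size s <= size t -> suffix s t.
Proof.
move=> sw tw st; have tw_le := size_suffix tw.
rewrite !suffixE in sw tw; move/eqP: sw => sE; move/eqP: tw => tE.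
have -> : s = drop (size t - size s) t.
  by rewrite -{2}tE drop_drop -{1}sE; congr drop; lia.
exact: suffix_drop.
Qed.

Lemma suffix_behead (T : eqType) (s w : seq T) : suffix s w -> suffix (behead s) w.
Proof. by apply: suffix_trans; rewrite -drop1 suffix_drop. Qed.

Lemma uniq_map_in_inj (T1 T2 : eqType) (f : T1 -> T2) (s : seq T1) :
  uniq (map f s) -> {in s &, injective f}.
Proof.
elim: s => [//|z s IH] /= /andP [fz us] x y.
rewrite !inE => /predU1P [->|xs] /predU1P [->|ys] // fxy.
- by move: fz; rewrite fxy map_f.
- by move: fz; rewrite -fxy map_f.
- exact: IH.
Qed.

Lemma bounded_ex_max (P : nat -> Prop) B : (exists m, P m) -> (forall m, P m -> m <= B) ->
  exists k, P k /\ forall m, P m -> m <= k.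
Proof.
elim: B => [|B IH] [m Pm] leB.
  by exists m; split=> // m' /leB; have := leB m Pm; rewrite !leqn0 => /eqP-> /eqP->.
have [PB|nPB] := classic (P B.+1); first by exists B.+1.
apply: IH; first by exists m.
by move=> m' Pm'; rewrite -ltnS ltn_neqAle leB // andbT; apply: contraPneq nPB => <-.
Qed.

Lemma size_block u i n : size (block_at u i n) = n.
Proof. by rewrite size_map size_iota. Qed.

Lemma nth_block u i n r : r < n -> nth false (block_at u i n) r = u (i + r).
Proof. by move=> rn; rewrite (nth_map 0) ?size_iota // nth_iota. Qed.

Lemma blockP u i n w : w = block_at u i n <->
  size w = n /\ forall r, r < n -> nth false w r = u (i + r).
Proof.
split=> [->|[<- wE]]; first by split; [exact: size_block | exact: nth_block].
by apply: (@eq_from_nth _ false) => [|r rw]; rewrite ?size_block ?nth_block ?wE.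
Qed.

Lemma take_block u i k n : k <= n -> take k (block_at u i n) = block_at u i k.
Proof.
move=> kn; apply/blockP; rewrite size_takel ?size_block //.
by split=> // r rk; rewrite nth_take // nth_block // (leq_trans rk).
Qed.

Lemma block_cons v q k : block_at v q k.+1 = v q :: block_at v q.+1 k.
Proof.
rewrite /block_at /= addn0 -add1n iotaDl -map_comp; congr cons.
by apply: eq_map => i /=; rewrite addnA addn1.
Qed.

Lemma block_rcons v q k : block_at v q k.+1 = rcons (block_at v q k) (v (q + k)).
Proof. by rewrite /block_at -addn1 iotaD map_cat cats1. Qed.

Lemma block_shift1 v q k : block_at (shiftn 1 v) q k = block_at v q.+1 k.
Proof. by apply: eq_map => i; rewrite /shiftn add1n addSn. Qed.

Definition factor u w := exists i, w = block_at u i (size w).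

Lemma Xplus_ext u f g : Xplus u f -> f =1 g -> Xplus u g.
Proof. by move=> uf fg N; have [n fn] := uf N; exists n => i iN; rewrite -fg fn. Qed.

Lemma Xtilde_shift u x (c : int) : Xtilde u x -> Xtilde u (fun z => x (z + c)%R).
Proof.
move=> ux p; apply: Xplus_ext (ux (p + c)%R) _ => i /=.
by rewrite -!addrA [(c + _)%R]addrC.
Qed.

Lemma Xtilde_Xplus u x : Xtilde u x -> Xplus u (fun i : nat => x (i%:Z)%R).
Proof. by move=> ux; apply: Xplus_ext (ux 0%R) _ => i /=; rewrite add0r. Qed.

Lemma occursP u w : w <> [::] -> occurs u w <-> exists y, fol u w y.
Proof.
move=> w0; split=> [[x [ux [p xw]]]|[y [_ [b [ub bw _]]]]].
- pose c : int := (p + (size w).-1%:Z)%R.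
  have uxc := Xtilde_shift c ux.
  exists (fun i : nat => x (i%:Z + c)%R); split; first exact: Xtilde_Xplus uxc.
  exists (fun z => x (z + c)%R); split=> // k kw.
  by rewrite -xw //; congr x; rewrite /c; ring.
- exists b; split=> //; exists (- (size w).-1%:Z)%R => k kw.
  by rewrite -bw //; congr b; ring.
Qed.

Lemma fol_rcons u a w b y : fol u (rcons (a :: w) b) y <->
  exists z, [/\ fol u (a :: w) z, z 1 = b & forall i, z i.+1 = y i].
Proof.
split.
- case=> _ [x [ux xw xy]]; rewrite size_rcons in xw.
  exists (fun i : nat => x (i%:Z - 1)%R); split.
  + split; first exact: Xtilde_Xplus (Xtilde_shift (-1) ux).
    exists (fun t => x (t - 1)%R); split=> //; first exact: Xtilde_shift.
    move=> k kw; have := xw k (ltnW kw); rewrite nth_rcons kw => <-.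
    by congr x; lia.
  + by have := xw _ (ltnSn _); rewrite nth_rcons ltnn eqxx => <-; congr x; lia.
  + by move=> i; rewrite -xy; congr x; lia.
- case=> z [[_ [x [ux xw xz]]] zb zy].
  have xy i : x (i%:Z + 1)%R = y i by rewrite -zy -xz; congr x; lia.
  split; first exact: Xplus_ext (Xtilde_Xplus (Xtilde_shift 1 ux)) xy.
  exists (fun t => x (t + 1)%R); split=> //; first exact: Xtilde_shift.
  rewrite size_rcons => k kw; rewrite nth_rcons.
  case: ltnP => [kw'|wk]; first by rewrite -xw //; congr x; lia.
  have -> : k = size (a :: w) by apply/eqP; rewrite eqn_leq -ltnS kw.
  by rewrite eqxx -zb -xz; congr x; lia.
Qed.

Lemma fol_behead u w y : 2 <= size w -> fol u w y -> fol u (behead w) y.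
Proof.
case: w => [|a [|c w]] //= _ [uy [x [ux xw xy]]].
split=> //; exists x; split=> //= k kw.
by have /= <- := xw k.+1 kw; congr x; lia.
Qed.

Lemma occurs_infix u w t d : occurs u w -> d + size t <= size w ->
  (forall k, k < size t -> nth false t k = nth false w (d + k)) -> occurs u t.
Proof.
move=> [x [ux [p xw]]] dt tw; exists x; split=> //; exists (p + d%:Z)%R => k kt.
by rewrite tw // -xw; [congr x; lia | lia].
Qed.

Lemma occurs_suffix u w t : occurs u w -> suffix t w -> occurs u t.
Proof.
move=> uw /suffixP [s wE]; rewrite {}wE in uw.
apply: (occurs_infix uw); first by rewrite size_cat.
by move=> k _; rewrite nth_cat ltnNge leq_addr addKn.
Qed.

Lemma occurs_belast u w b : occurs u (rcons w b) -> occurs u w.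
Proof.
move=> uw; apply: (occurs_infix (d := 0) uw); first by rewrite size_rcons.
by move=> k kw; rewrite nth_rcons kw.
Qed.

Lemma occurs_factor u w : occurs u w -> factor u w.
Proof.
case=> x [ux [p xw]]; have [n xn] := ux p (size w).
by exists n; apply/blockP; split=> // r rw; rewrite -xw // -(xn r rw).
Qed.

Definition same_fol u v w := forall y, fol u v y <-> fol u w y.

Lemma same_fol_sym u v w : same_fol u v w -> same_fol u w v.
Proof. by move=> vw y; rewrite vw. Qed.

Lemma same_fol_rcons u v w b : v <> [::] -> w <> [::] -> same_fol u v w ->
  same_fol u (rcons v b) (rcons w b).
Proof.
case: v => [|a v] // _; case: w => [|c w] // _ vw y.
by rewrite !fol_rcons; split=> -[z [/vw]]; exists z.
Qed.

Lemma occurs_rcons_same_fol u v w b : v <> [::] -> w <> [::] -> same_fol u v w ->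
  occurs u (rcons v b) -> occurs u (rcons w b).
Proof.
move=> v0 w0 vw; rewrite !occursP; try by case: (v) v0; case: (w) w0.
by case=> y /(same_fol_rcons b v0 w0 vw); exists y.
Qed.

Lemma significant_nil u : ~ significant u [::].
Proof. by case=> // -[]. Qed.

Lemma is_sig_neq0 u w s : is_sig u w s -> s <> [::].
Proof. by case=> _ + _ s0; rewrite s0; apply: significant_nil. Qed.

Lemma is_sig_exists u w : w <> [::] -> exists s, is_sig u w s.
Proof.
move=> w0; pose P k := exists2 s, suffix s w & significant u s /\ size s = k.
have P1 : P 1.
  exists (drop (size w).-1 w); first exact: suffix_drop.
  by split; [left|]; rewrite size_drop; case: (w) w0 => //= a t; rewrite subSnn.
have Pbound m : P m -> m <= size w by case=> s sw [_ <-]; exact: size_suffix.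
have [k [[s sw [us <-]] maxk]] := bounded_ex_max (ex_intro P 1 P1) Pbound.
by exists s; split=> // t tw ut; apply: maxk; exists t.
Qed.

Lemma is_sig_inj u w s t : is_sig u w s -> is_sig u w t -> s = t.
Proof.
case=> sw us maxs [tw ut maxt]; apply: (suffix_eq_size sw tw).
by apply/eqP; rewrite eqn_leq (maxt _ sw us) (maxs _ tw ut).
Qed.

Lemma is_sig1 u a : is_sig u [:: a] [:: a].
Proof. by split; [exact: suffix_refl | left | move=> g /size_suffix]. Qed.

Lemma same_fol_sig_suffix u w s t : occurs u w -> is_sig u w s ->
  suffix t w -> size s <= size t -> same_fol u t s.
Proof.
move=> uw ws; have s0 := is_sig_neq0 ws; case: ws => sw us maxs.
elim: t => [|a t IH] tw st.
  by move: st; rewrite leqn0 size_eq0 => /eqP /s0.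
have [sz|sz] := eqVneq (size (a :: t)) (size s).
  by rewrite (suffix_eq_size tw sw sz).
have lt_st : size s < size (a :: t) by rewrite ltn_neqAle eq_sym sz.
have t_s : same_fol u t s.
  by apply: IH; [exact: (suffix_behead tw) | rewrite -ltnS].
have nsig : ~ significant u (a :: t).
  by move=> uat; have := maxs _ tw uat; rewrite leqNgt lt_st.
have at2 : 2 <= size (a :: t) by apply: leq_ltn_trans lt_st; case: (s) s0.
move=> y; rewrite -t_s; split; first exact: fol_behead.
move=> ty; apply: NNPP => naty; apply: nsig; right; split=> //.
- exact: occurs_suffix uw tw.
- by move=> z; apply: fol_behead.
- by exists y.
Qed.

Lemma is_sig_rcons u w v b s : occurs u (rcons w b) -> is_sig u w v ->
  is_sig u (rcons w b) s -> is_sig u (rcons v b) s.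
Proof.
move=> uwb wv wbs; have uw := occurs_belast uwb.
have v0 := is_sig_neq0 wv; have s0 := is_sig_neq0 wbs.
case: (wv) => vw _ _; case: wbs => + us maxs.
case/lastP: s s0 us maxs => [//|g c] _ ugc maxs.
rewrite suffix_rcons => /andP [/eqP cb gw]; subst c.
have gv : size g <= size v.
  rewrite leqNgt; apply/negP => vg.
  have [a [a' [g' gE]]] : exists a a' g', g = a :: a' :: g'.
    case: (g) vg => [|x [|x' h]] //=; last by exists x, x', h.
    by rewrite ltnS leqn0 size_eq0 => /eqP /v0.
  have g_v := same_fol_sig_suffix uw wv gw (ltnW vg).
  have g'_v : same_fol u (behead g) v.
    by apply: same_fol_sig_suffix uw wv (suffix_behead gw) _; move: vg; rewrite gE.
  have /(same_fol_rcons b) gg' : same_fol u g (behead g) by move=> y; rewrite g_v g'_v.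
  rewrite gE in ugc gg'; case: ugc => [|[_ _ _ [y [y' ny]]]]; first by rewrite size_rcons.
  by apply: ny; apply/gg'.
split=> //; first by rewrite suffix_rcons eqxx (suffix_leq_size gw vw gv).
by move=> t tv; apply: maxs; apply: suffix_trans tv _; rewrite suffix_rcons eqxx.
Qed.

Definition eventually_periodic (v : nat -> bool) :=
  exists i j, i < j /\ forall t, v (i + t) = v (j + t).

Lemma sturmian_aperiodic u : sturmian u -> ~ eventually_periodic u.
Proof.
move=> su [i [j [ij per]]].
have early L q : exists2 q', q' < j & block_at u q L = block_at u q' L.
  elim: q {-2}q (leqnn q) => [|Q IH] q qQ; first by exists q => //; lia.
  case: (ltnP q j) => [qj|jq]; first by exists q.
  have /IH [q' q'j qE] : q - (j - i) <= Q by lia.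
  exists q' => //; rewrite -qE.
  apply/blockP; split=> [|r rL]; first exact: size_block.
  rewrite nth_block // (_ : q + r = j + (q - j + r)); last by lia.
  by rewrite -per; congr u; lia.
have [s [us ss sE]] := su j (leq_ltn_trans (leq0n i) ij).
have sub : {subset s <= [seq block_at u q j | q <- iota 0 j]}.
  move=> x /sE [_ [q ->]]; have [q' q'j ->] := early j q.
  by apply: map_f; rewrite mem_iota.
by have := uniq_leq_size us sub; rewrite size_map size_iota ss ltnn.
Qed.

Definition right_determined (v : nat -> bool) k :=
  forall q1 q2, block_at v q1 k = block_at v q2 k -> v (q1 + k) = v (q2 + k).

Lemma right_determined_periodic v k : right_determined v k -> eventually_periodic v.
Proof.
move=> rdv; pose words := [seq val t | t : k.-tuple bool].
pose ps := [seq block_at v q k | q <- iota 0 (size words).+1].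
have sub : {subset ps <= words}.
  move=> _ /mapP [q _ ->]; apply/mapP.
  by exists (Tuple (introT eqP (size_block v q k))); rewrite ?mem_enum.
have /(uniqPn [::]) [i [j [ij jps]]] : ~~ uniq ps.
  by apply/negP => /uniq_leq_size /(_ sub); rewrite size_map size_iota ltnn.
have ips := ltn_trans ij jps.
rewrite size_map size_iota in jps ips.
rewrite !(nth_map 0) ?size_iota ?nth_iota // !add0n => bij.
have blocks t : block_at v (i + t) k = block_at v (j + t) k.
  elim: t => [|t IH]; first by rewrite !addn0.
  have := congr1 behead (congr2 rcons IH (rdv _ _ IH)).
  by rewrite -!block_rcons !block_cons /= !addnS.
exists (i + k), (j + k); split=> [|t]; first by rewrite ltn_add2r.
by rewrite addnAC [j + k + t]addnAC; apply: rdv.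
Qed.

Lemma not_right_determined_blocks v m : (forall k, k < m -> ~ right_determined v k) ->
  exists qs : seq nat, size qs = m.+1 /\ uniq [seq block_at v q m | q <- qs].
Proof.
elim: m => [|m IH] nrd; first by exists [:: 0].
have [qs [qs_size qs_uniq]] : exists qs : seq nat,
    size qs = m.+1 /\ uniq [seq block_at v q m | q <- qs].
  by apply: IH => k km; apply: nrd; rewrite ltnS ltnW.
pose B := [seq block_at v q m.+1 | q <- qs].
have takeB : map (take m) B = [seq block_at v q m | q <- qs].
  by rewrite -map_comp; apply: eq_map => q /=; rewrite take_block.
have [q1 [q2 [b12 v12]]] : exists q1 q2, block_at v q1 m = block_at v q2 m /\
    v (q1 + m) <> v (q2 + m).
  apply: NNPP => nex; apply: (nrd m (ltnSn m)) => q1 q2 b12.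
  by apply: NNPP => v12; apply: nex; exists q1, q2.
have [q qB] : exists q, block_at v q m.+1 \notin B.
  case B1: (block_at v q1 m.+1 \in B); last by exists q1; rewrite B1.
  exists q2; apply/negP => B2; apply: v12.
  have uB : uniq (map (take m) B) by rewrite takeB.
  have := uniq_map_in_inj uB B1 B2.
  rewrite !take_block // b12 => /(_ erefl)/(congr1 (nth false ^~ m)).
  by rewrite !nth_block.
exists (q :: qs); split; first by rewrite /= qs_size.
by rewrite /= qB (map_uniq (f := take m)) ?takeB.
Qed.

Lemma sturmian_recurrent u i m : sturmian u ->
  exists2 j, 0 < j & block_at u j m = block_at u i m.
Proof.
move=> su; have [->|m_gt0] := posnP m; first by exists 1.
apply: NNPP => nrec.
have nrd k : k < m -> ~ right_determined (shiftn 1 u) k.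
  move=> _ /right_determined_periodic [i' [j' [ij per]]].
  by apply: (sturmian_aperiodic su); exists i'.+1, j'.+1.
have [qs [qs_size qs_uniq]] := not_right_determined_blocks nrd.
have [s [us ss sE]] := su m m_gt0.
have ui_s : block_at u i m \in s by apply/sE; split; [exact: size_block | exists i].
have sub : {subset [seq block_at (shiftn 1 u) q m | q <- qs] <= rem (block_at u i m) s}.
  move=> _ /mapP [q _ ->]; rewrite block_shift1 (mem_rem_uniq _ us) !inE.
  apply/andP; split; first by apply/eqP => uq; apply: nrec; exists q.+1.
  by apply/sE; split; [exact: size_block | exists q.+1].
by have := uniq_leq_size qs_uniq sub; rewrite size_map qs_size size_rem // ss ltnn.
Qed.

Lemma factor_extend u w : sturmian u -> factor u w -> exists a b, factor u (a :: rcons w b).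
Proof.
move=> su [i wE]; have [j j_gt0 jE] := sturmian_recurrent i (size w) su.
exists (u j.-1), (u (j + size w)), j.-1.
by rewrite /= size_rcons block_cons block_rcons prednK // jE -wE.
Qed.

Definition extend u w : seq bool :=
  epsilon (inhabits w) (fun w' => factor u w' /\ exists a b, w' = a :: rcons w b).

Lemma extendP u w : sturmian u -> factor u w ->
  factor u (extend u w) /\ exists a b, extend u w = a :: rcons w b.
Proof.
move=> su /(factor_extend su) [a [b ab]].
apply: (epsilon_spec (inhabits w) (fun w' => factor u w' /\ exists a b, w' = a :: rcons w b)).
by exists (a :: rcons w b); split=> //; exists a, b.
Qed.

Section BiInfiniteExtension.

Variables (u : nat -> bool) (w : seq bool).
Hypotheses (su : sturmian u) (uw : factor u w) (w0 : w <> [::]).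

Let grow k := iter k (extend u) w.

Lemma factor_grow k : factor u (grow k).
Proof. by elim: k => [|k IH] //=; case: (extendP su IH). Qed.

Lemma grow_succ k : exists a b, grow k.+1 = a :: rcons (grow k) b.
Proof. by case: (extendP su (factor_grow k)). Qed.

Lemma size_grow k : size (grow k) = size w + k + k.
Proof.
elim: k => [|k IH]; first by rewrite !addn0.
by have [a [b ->]] := grow_succ k; rewrite /= size_rcons IH !addnS.
Qed.

Lemma nth_grow_shift k d r : r < size (grow k) ->
  nth false (grow (k + d)) (r + d) = nth false (grow k) r.
Proof.
elim: d r => [|d IH] r rk; first by rewrite !addn0.
rewrite !addnS; have [a [b ->]] := grow_succ (k + d); rewrite /= nth_rcons IH //.
by rewrite !size_grow in rk *; rewrite ifT //; lia.
Qed.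

Lemma nth_grow_consistent k k' r r' : r < size (grow k) -> r' < size (grow k') ->
  r + k' = r' + k -> nth false (grow k) r = nth false (grow k') r'.
Proof.
wlog kk' : k k' r r' / k <= k'.
  move=> gen rk rk' e; case: (leqP k k') => [kk'|/ltnW k'k]; first exact: gen.
  by apply/esym/gen.
move=> rk _ e; rewrite -(nth_grow_shift (k' - k) rk) (subnKC kk'); congr nth; lia.
Qed.

(* [grow k] sits at positions -k, ..., size w + k - 1 of the point. *)
Definition ext_point (z : int) : bool :=
  match z with
  | Posz n => nth false (grow n) (n + n)
  | Negz n => nth false (grow n.+1) 0
  end.

Lemma ext_pointE k r : r < size (grow k) -> ext_point (r%:Z - k%:Z)%R = nth false (grow k) r.
Proof.
have w_gt0 : 0 < size w by case: (w) w0.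
move=> rk; rewrite size_grow in rk; case E: (r%:Z - k%:Z)%R => [n|n] /=.
- by apply: (@nth_grow_consistent n k); rewrite ?size_grow //; lia.
- by apply: (@nth_grow_consistent n.+1 k); rewrite ?size_grow //; move: E; rewrite NegzE; lia.
Qed.

Lemma ext_point_Xtilde : Xtilde u ext_point.
Proof.
move=> p N; pose k := (absz p + N)%N.
have [j jE] := factor_grow k.
pose c := absz (p + k%:Z)%R.
have cE : (c%:Z = p + k%:Z)%R by rewrite /c /k; lia.
exists (j + c) => i iN.
have rk : c + i < size (grow k) by rewrite size_grow /c /k; lia.
have -> : (p + i%:Z)%R = ((c + i)%:Z - k%:Z)%R by rewrite PoszD cE; ring.
by rewrite ext_pointE // jE nth_block -?jE // addnA.
Qed.

End BiInfiniteExtension.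

Lemma factor_occurs u w : sturmian u -> w <> [::] -> factor u w -> occurs u w.
Proof.
move=> su w0 uw; exists (ext_point u w); split; first exact: ext_point_Xtilde.
by exists 0%R => k kw; rewrite add0r -(subr0 k%:Z) ext_pointE.
Qed.

Lemma occurs_letter u a : sturmian u -> occurs u [:: a].
Proof.
move=> su; apply: factor_occurs => //; apply: NNPP => na.
have [s [us ss sE]] := su 1 (leqnn 1).
have sub : {subset s <= [:: [:: ~~ a]]}.
  move=> _ /sE [_ [i ->]]; rewrite inE /block_at /= addn0.
  have : u i != a by apply/eqP=> ui; apply: na; exists i; rewrite /block_at /= addn0 ui.
  by case: (u i); case: (a).
by have := uniq_leq_size us sub; rewrite ss.
Qed.

Definition sig_of u w : seq bool := epsilon (inhabits [::]) (is_sig u w).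

Lemma sig_ofP u w : w <> [::] -> is_sig u w (sig_of u w).
Proof. by move/(is_sig_exists u)/(epsilon_spec (inhabits [::])). Qed.

Lemma sig_of1 u a : sig_of u [:: a] = [:: a].
Proof. by apply: is_sig_inj (sig_ofP u _) (is_sig1 u a). Qed.

Lemma last_sig_of u w : w <> [::] -> last false (sig_of u w) = last false w.
Proof.
move=> w0; have ws := sig_ofP u w0; have s0 := is_sig_neq0 ws.
case: ws => /suffixP [t wE] _ _; rewrite [in RHS]wE last_cat.
by move: s0; case/lastP: (sig_of u w) => [//|s c] _; rewrite !last_rcons.
Qed.

Lemma same_fol_sig_of u w : occurs u w -> w <> [::] -> same_fol u w (sig_of u w).
Proof.
move=> uw w0; have ws := sig_ofP u w0; have [/size_suffix sw _ _] := ws.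
exact: same_fol_sig_suffix uw ws (suffix_refl w) sw.
Qed.

Lemma sig_of_rcons u w b : occurs u (rcons w b) -> w <> [::] ->
  sig_of u (rcons w b) = sig_of u (rcons (sig_of u w) b).
Proof.
move=> uwb w0; have ws := sig_ofP u w0.
have wbs := is_sig_rcons uwb ws (sig_ofP u (@rcons_neq0 _ w b)).
by apply: is_sig_inj wbs (sig_ofP u _); case: (sig_of u w) (is_sig_neq0 ws).
Qed.

Lemma hb_arrow_sig_of u w b : occurs u (rcons w b) -> w <> [::] ->
  hb_arrow u (sig_of u w) (sig_of u (rcons w b)).
Proof.
move=> uwb w0; have uw := occurs_belast uwb; have [_ sig_w _] := sig_ofP u w0.
split=> //; exists b; rewrite sig_of_rcons //; split; last by apply: sig_ofP; apply: rcons_neq0.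
apply: occurs_rcons_same_fol uwb => //; first exact: is_sig_neq0 (sig_ofP u w0).
exact: same_fol_sig_of uw w0.
Qed.

Lemma hb_arrow_from_sig_of u w s : occurs u w -> w <> [::] ->
  hb_arrow u (sig_of u w) s -> exists2 b, occurs u (rcons w b) & s = sig_of u (rcons w b).
Proof.
move=> uw w0 [_ [b [usb ss]]].
have uwb : occurs u (rcons w b).
  apply: occurs_rcons_same_fol usb => //; first exact: is_sig_neq0 (sig_ofP u w0).
  exact/same_fol_sym/same_fol_sig_of.
exists b; rewrite // sig_of_rcons //.
exact: is_sig_inj ss (sig_ofP u (@rcons_neq0 _ _ b)).
Qed.

Definition sig_path u w : seq (seq bool) := mkseq (fun k => sig_of u (take k.+1 w)) (size w).

Lemma size_sig_path u w : size (sig_path u w) = size w.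
Proof. exact: size_mkseq. Qed.

Lemma sig_path_rcons u w b :
  sig_path u (rcons w b) = rcons (sig_path u w) (sig_of u (rcons w b)).
Proof.
rewrite /sig_path size_rcons mkseqS take_oversize ?size_rcons //; congr rcons.
apply/eq_in_map => k; rewrite mem_iota add0n => kw.
by rewrite -cats1 takel_cat.
Qed.

Lemma last_sig_path u w : w <> [::] -> last [::] (sig_path u w) = sig_of u w.
Proof. by case/lastP: w => // w b _; rewrite sig_path_rcons last_rcons. Qed.

Lemma map_last_sig_path u w : map (last false) (sig_path u w) = w.
Proof.
elim/last_ind: w => [//|w b IH].
by rewrite sig_path_rcons map_rcons IH last_sig_of ?last_rcons //; apply: rcons_neq0.
Qed.

Lemma hb_path_from_rcons u v p s :
  hb_path_from u v (rcons p s) <-> hb_path_from u v p /\ hb_arrow u (last v p) s.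
Proof. by elim: p v => [|v' p IH] v /=; [tauto | rewrite IH; tauto]. Qed.

Lemma hb_path_rcons u p s : p <> [::] ->
  hb_path u (rcons p s) <-> hb_path u p /\ hb_arrow u (last [::] p) s.
Proof. by case: p => [//|v p] _ /=; rewrite hb_path_from_rcons; tauto. Qed.

Lemma head_sig_path u a w : head [::] (sig_path u (a :: w)) = [:: a].
Proof. by rewrite /sig_path /= take0 sig_of1. Qed.

Lemma sig_path_neq0 u w : w <> [::] -> sig_path u w <> [::].
Proof. by move=> w0 p0; apply: w0; rewrite -(map_last_sig_path u w) p0. Qed.

Lemma sig_path_hb_path u w : occurs u w -> w <> [::] -> hb_path u (sig_path u w).
Proof.
elim/last_ind: w => [//|w b IH] uwb _; rewrite sig_path_rcons.
have [->|/eqP w0] := eqVneq w [::].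
  by split=> //; case: (sig_ofP u (@rcons_neq0 _ [::] b)).
apply/hb_path_rcons; first exact: sig_path_neq0.
rewrite last_sig_path //; split; last exact: hb_arrow_sig_of.
exact: IH (occurs_belast uwb) w0.
Qed.

Lemma hb_path_sig_path u p : sturmian u -> hb_path u p -> size (head [::] p) = 1 ->
  exists2 w, occurs u w & p = sig_path u w.
Proof.
move=> su; elim/last_ind: p => [//|p s IH].
have [->|/eqP p0] := eqVneq p [::].
  case: s => [|a [|]] //= _ _.
  by exists [:: a]; [exact: occurs_letter | rewrite /sig_path /= sig_of1].
case/(hb_path_rcons u s p0) => up arr hd.
have [w uw pE] : exists2 w, occurs u w & p = sig_path u w.
  by apply: IH up _; move: hd; case: (p) p0.
have w0 : w <> [::] by move=> w0; apply: p0; rewrite pE w0.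
rewrite pE last_sig_path // in arr.
have [b uwb ->] := hb_arrow_from_sig_of uw w0 arr.
by exists (rcons w b); rewrite // sig_path_rcons pE.
Qed.

Theorem theorem5p10 (u : nat -> bool) :
  sturmian u ->
  forall n : nat, (1 <= n)%N ->
    has_card (fun p : seq (seq bool) =>
      [/\ hb_path u p, size p = n & head [::] p \in [:: [:: false]; [:: true]]])
      n.+1.
Proof.
move=> su n n_gt0; have [s [us ss sE]] := su n n_gt0.
exists (map (sig_path u) s); split.
- by rewrite map_inj_uniq //; apply: can_inj (map_last_sig_path u).
- by rewrite size_map.
- move=> p; split.
  + case/mapP=> w /sE [wn [i wE]] ->; rewrite size_sig_path.
    case: w wn wE => [|a w] wn wE; first by move: n_gt0; rewrite -wn.
    split=> //; last by rewrite head_sig_path; case: (a).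
    by apply: sig_path_hb_path => //; apply: factor_occurs => //; exists i; rewrite wn.
  + case=> up pn hd; have hd1 : size (head [::] p) = 1.
      by move: hd; rewrite !inE => /orP [] /eqP ->.
    have [w uw pE] := hb_path_sig_path su up hd1.
    rewrite pE; apply: map_f; apply/sE; rewrite -(size_sig_path u) -pE pn.
    by split=> //; have [i wE] := occurs_factor uw; exists i; rewrite -pn pE size_sig_path.
Qed.
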